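(* Let $(X,T)$ and $(Y,S)$ be dynamical systems. The following are equivalent: (1) $(X,T)$ and $(Y,S)$ are weakly disjoint; (2) both $\mathrm{Tran}_{k\mathcal{N}_S}(X,T)$ and $\mathrm{Tran}_{k\mathcal{N}_T}(Y,S)$ are dense $G_\delta$ subsets (of $X$ and $Y$ respectively); (3) $\mathrm{Tran}_{k\mathcal{N}_S}(X,T)$ is a dense $G_\delta$ subset of $X$; (4) both $\mathrm{Tran}_{k\mathcal{N}_S}(X,T)$ and $\mathrm{Tran}_{k\mathcal{N}_T}(Y,S)$ are nonempty; (5) $\mathrm{Tran}_{k\mathcal{N}_S}(X,T)$ is nonempty.
   Context: A dynamical system $(X,T)$: $X$ is a compact metric space with more than one point and without isolated points, $T:X\to X$ a continuous surjection. ''Opene'' means open and nonempty. $N_T(U,V)=\{n\in\mathbb{Z}_+:U\cap T^{-n}V\neq\varnothing\}$; $\mathcal{N}_T$ is the family of all subsets of $\mathbb{Z}_+$ containing $N_T(U,V)$ for some opene $U,V\subset X$ (similarly $\mathcal{N}_S$ for $(Y,S)$). For a family $\mathcal{F}$ of subsets of $\mathbb{Z}_+$, its dual is $k\mathcal{F}=\{F\subset\mathbb{Z}_+:F\cap F'\neq\varnothing\ \forall F'\in\mathcal{F}\}$. For $x\in X$ and $G\subset X$, $n_T(x,G)=\{n\in\mathbb{Z}_+:T^nx\in G\}$; $\mathrm{Tran}_{\mathcal{F}}(X,T)$ is the set of $x\in X$ with $n_T(x,U)\in\mathcal{F}$ for every opene $U\subset X$. $(X,T)$ and $(Y,S)$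 are weakly disjoint if $(X\times Y,T\times S)$ is transitive, i.e. $N_{T\times S}(A,B)\neq\varnothing$ for all opene $A,B\subset X\times Y$. *)

From HB Require Import structures.
From mathcomp Require Import all_boot all_order all_algebra.
From mathcomp Require Import all_classical all_reals all_analysis.
From mathcomp Require Import borel_hierarchy.
Set Implicit Arguments. Unset Strict Implicit. Unset Printing Implicit Defensive.
Import Order.TTheory GRing.Theory Num.Theory.
Local Open Scope classical_set_scope.

(* A compact metric space (pseudometric + Hausdorff = metric), with more
   than one point and without isolated points, with a continuous surjection. *)
Definition dynsys {R : realType} (X : pseudoMetricType R) (T : X -> X) : Prop :=
  [/\ compact [set: X], hausdorff_space X,
      (exists x y : X, x <> y),
      (forall x : X, ~ open [set x]) &
      continuous T /\ (forall y : X, exists x, T x = y)].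

Definition opene {X : topologicalType} (U : set X) : Prop := open U /\ U !=set0.

Definition hitting_times {X : Type} (T : X -> X) (U V : set X) : set nat :=
  [set n | U `&` (iter n T) @^-1` V !=set0].

Definition NFam {X : topologicalType} (T : X -> X) : set (set nat) :=
  [set F | exists U V : set X, [/\ opene U, opene V & hitting_times T U V `<=` F]].

Definition kdual (Fam : set (set nat)) : set (set nat) :=
  [set F | forall F', Fam F' -> F `&` F' !=set0].

Definition visit_times {X : Type} (T : X -> X) (x : X) (G : set X) : set nat :=
  [set n | G (iter n T x)].

Definition Tran {X : topologicalType} (Fam : set (set nat)) (T : X -> X) : set X :=
  [set x | forall U : set X, opene U -> Fam (visit_times T x U)].

Definition prod_map {X Y : Type} (T : X -> X) (S : Y -> Y) : X * Y -> X * Y :=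
  fun p => (T p.1, S p.2).

Definition transitive_sys {X : topologicalType} (T : X -> X) : Prop :=
  forall A B : set X, opene A -> opene B -> hitting_times T A B !=set0.

Definition weakly_disjoint {X Y : topologicalType} (T : X -> X) (S : Y -> Y) : Prop :=
  transitive_sys (prod_map T S).

From HB Require Import structures.
From mathcomp Require Import all_boot all_order all_algebra.
From mathcomp Require Import all_classical all_reals all_analysis.
From mathcomp Require Import borel_hierarchy.
Import Order.TTheory GRing.Theory Num.Theory.
Local Open Scope classical_set_scope.

(* (5) => (1): let x have return times in kN_S.  Given opene U1, U2 of X and
   V1, V2 of Y, pick a visit time m of x to U1; since X is T1 without isolated
   points, U2 minus the orbit segment x, ..., T^m x is still opene, so x visits
   it at some n > m that is also a hitting time of S from S^-m V1 to V2, and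
   n - m is a common hitting time for (U1, U2) and (V1, V2).  This is weak
   disjointness, which is symmetric in the two systems.
   (1) => (3): over countable pi-bases (b_i) of X and (c_j) of Y, the set
   Tran_{kN_S}(X, T) is the intersection of the open sets
   U_{n in N_S(c_j, c_k)} T^-n b_i, each dense by weak disjointness, so it is
   a dense G_delta by Baire's theorem in the compact metric space X. *)

Lemma opene_setT {X : topologicalType} (x : X) : opene [set: X].
Proof. by split; [exact: openT | exists x]. Qed.

Lemma dense_nonempty {X : topologicalType} {A : set X} (x : X) :
  dense A -> A !=set0.
Proof. by move=> dA; have [y [_ Ay]] := dA _ (ex_intro _ x I) openT; exists y. Qed.

Lemma open_setX {X Y : topologicalType} {A : set X} {B : set Y} :
  open A -> open B -> open (A `*` B).
Proof.
move=> oA oB; rewrite openE => p [Ap Bp]; exists (A, B) => //.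
by split; apply: open_nbhs_nbhs.
Qed.

Lemma opene_setX {X Y : topologicalType} {A : set X} {B : set Y} :
  opene A -> opene B -> opene (A `*` B).
Proof.
by move=> [oA [a Aa]] [oB [b Bb]]; split; [exact: open_setX | exists (a, b)].
Qed.

Lemma open_setX_subset {X Y : topologicalType} {A : set (X * Y)} {p : X * Y} :
  open A -> A p ->
  exists U V, [/\ open_nbhs p.1 U, open_nbhs p.2 V & U `*` V `<=` A].
Proof.
rewrite openE => oA /oA [[U V] /= []].
rewrite !nbhsE => -[U' oU' U'U] [V' oV' V'V] UVA.
by exists U', V'; split => // -[x y] [/U'U Ux /V'V Vy]; exact: UVA.
Qed.

Lemma opene_setD_finite {X : topologicalType} (U A : set X) :
  accessible_space X -> (forall x : X, ~ open [set x]) ->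
  finite_set A -> opene U -> opene (U `\` A).
Proof.
move=> aX noiso fA [oU [u Uu]].
have closed_fin := proj1 accessible_finite_set_closed aX.
split; first exact: openI oU (closed_openC (closed_fin _ fA)).
(* Otherwise [U] would be a finite open set, and in a T1 space each of its
   points would be isolated. *)
apply/set0P/eqP; rewrite setD_eq0 => UA; apply: (noiso u).
have -> : [set u] = U `\` (A `\` [set u]).
  have UA0 : U `\` A = set0 by rewrite setD_eq0.
  by rewrite setDDr UA0 set0U; apply/seteqP; split=> [x -> //|x [_ ->]].
exact: openI oU (closed_openC (closed_fin _ (finite_setD _ fA))).
Qed.

Lemma opene_preimage {X Y : topologicalType} (f : X -> Y) (V : set Y) :
  continuous f -> (forall y, exists x, f x = y) -> opene V -> opene (f @^-1` V).
Proof.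
move=> cf sf [oV [v Vv]]; split; first exact: open_comp.
by have [x fx] := sf v; exists x; rewrite /preimage /= fx.
Qed.

Lemma Gdelta_dense_bigcap {X : topologicalType} {J : countType} (G : J -> set X) :
  (forall i, open (G i) /\ dense (G i)) -> Gdelta_dense (\bigcap_i G i).
Proof.
move=> odG; exists (fun k => if unpickle k is Some i then G i else setT).
  move=> k; case: unpickle => [i|]; first exact: odG.
  by split; [exact: openT | move=> D [d Dd] _; exists d].
apply/seteqP; split=> [x Gx k _|x Gx i _]; first by case: unpickle => // i; exact: Gx.
by have := Gx (pickle i) I; rewrite /= pickleK.
Qed.

Definition pi_base {X : topologicalType} (b : nat -> set X) :=
  (forall i, opene (b i)) /\ (forall U, opene U -> exists i, b i `<=` U).

Section pseudometric.
Context {R : realType}.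

Lemma opene_closure_subset (X : pseudoMetricType R) (W : set X) :
  opene W -> exists2 O, opene O & closure O `<=` W.
Proof.
move=> [oW [w Ww]].
have /nbhs_ballP[e /= e0 eW] : nbhs w W by exact: open_nbhs_nbhs.
have e20 : (0 < e / 2)%R by rewrite divr_gt0.
exists (ball w (e / 2))°.
  by split; [exact: open_interior | exists w; exact: nbhsx_ballx].
move=> y cly; apply: eW.
have /cly[z [/interior_subset wz yz]] : nbhs y (ball y (e / 2)) by exact: nbhsx_ballx.
rewrite (splitr e); apply: (ball_triangle wz); exact: ball_sym.
Qed.

Lemma compact_Baire (X : pseudoMetricType R) (F : (set X)^nat) :
  compact [set: X] -> (forall i, open (F i) /\ dense (F i)) ->
  dense (\bigcap_i F i).
Proof.
move=> cX odF D D0 oD.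
have shrink (p : nat * set X) : exists W, opene p.2 ->
    opene W /\ closure W `<=` p.2 `&` F p.1.
  case: p => n O /=; have [[oO O0]|nO] := pselect (opene O); last by exists set0 => /nO.
  have [W oW WOF] : exists2 W, opene W & closure W `<=` O `&` F n.
    apply: opene_closure_subset.
    by split; [exact: openI oO (odF n).1 | exact: (odF n).2 O O0 oO].
  by exists W.
have [g gP] := choice shrink.
pose fix O n := if n is m.+1 then g (m.+1, O m) else g (0%N, D).
have O0 : opene (O 0%N) /\ closure (O 0%N) `<=` D `&` F 0%N by exact: (gP (0%N, D)).
have OS n : opene (O n) -> opene (O n.+1) /\ closure (O n.+1) `<=` O n `&` F n.+1.
  exact: (gP (n.+1, O n)).
have oO n : opene (O n) by elim: n => [|n IH]; [exact: O0.1 | exact: (OS n IH).1].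
have O_decr m k : O (k + m)%N `<=` O m.
  elim: k => [|k IH] //= z Oz; apply: IH.
  by have [] := (OS _ (oO (k + m)%N)).2 z (subset_closure Oz).
have [a aO] := choice (fun n => (oO n).2).
(* A cluster point of [a] lies in the closure of every [O m]. *)
have [l [_ la]] := cX (a @ \oo) _ filterT.
have clO m : closure (O m) l.
  move=> B nB; apply: la nB; exists m => // n /= mn.
  by rewrite -(subnK mn); apply: O_decr; exact: aO.
exists l; split; first by have [] := O0.2 l (clO 0%N).
case=> [|i] _; first by have [] := O0.2 l (clO 0%N).
by have [] := (OS _ (oO i)).2 l (clO i.+1).
Qed.

(* [compact_second_countable] is stated for pointed spaces. *)
Definition pointed_at {X : Type} (x0 : X) : Type := X.
HB.instance Definition _ (X : pseudoMetricType R) (x0 : X) :=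
  PseudoMetric.copy (pointed_at x0) X.
HB.instance Definition _ (X : pseudoMetricType R) (x0 : X) :=
  isPointed.Build (pointed_at x0) x0.

Lemma compact_pi_base {X : pseudoMetricType R} (x0 : X) :
  compact [set: X] -> exists b : nat -> set X, pi_base b.
Proof.
move=> cX; have [B /countable_injP[f injf] [oB Bbase]] :=
  @compact_second_countable R (pointed_at x0) cX.
pose b n := if pselect (exists U, [/\ B U, U !=set0 & f U = n]) is left h
  then projT1 (cid h) else setT.
have bE U : B U -> U !=set0 -> b (f U) = U.
  move=> BU U0; rewrite /b; case: pselect => [h|[]]; last by exists U.
  by case: (cid h) => V [BV _ fV] /=; apply: injf; rewrite ?inE.
exists b; split=> [i|U [oU [u Uu]]].
  rewrite /b; case: pselect => [h|_]; last exact: opene_setT.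
  by case: (cid h) => V [BV V0 _] /=; split; [exact: oB|].
have /Bbase[V [BV Vu] VU] : nbhs u U by exact: open_nbhs_nbhs.
by exists (f V); rewrite bE //; exists u.
Qed.

End pseudometric.

Lemma continuous_iter {X : topologicalType} (T : X -> X) n :
  continuous T -> continuous (iter n T).
Proof.
move=> cT; elim: n => [|n IH] x /=; first exact: cvg_id.
exact: continuous_comp (IH x) (cT _).
Qed.

Lemma iter_surjective {X : Type} (T : X -> X) n :
  (forall y, exists x, T x = y) -> forall y, exists x, iter n T x = y.
Proof.
move=> sT; elim: n => [|n IH] y /=; first by exists y.
by have [z <-] := sT y; have [x <-] := IH z; exists x.
Qed.

Lemma iter_prod_map {X Y : Type} (T : X -> X) (S : Y -> Y) n p :
  iter n (prod_map T S) p = (iter n T p.1, iter n S p.2).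
Proof. by elim: n => [|n IH] /=; [case: p | rewrite IH]. Qed.

Lemma hitting_timesS {X : Type} (T : X -> X) (U U' V V' : set X) :
  U `<=` U' -> V `<=` V' -> hitting_times T U V `<=` hitting_times T U' V'.
Proof. by move=> UU' VV' n [x [Ux Vx]]; exists x; split; [exact: UU' | exact: VV']. Qed.

Lemma kdual_NFamP {Y : topologicalType} (S : Y -> Y) (F : set nat) :
  kdual (NFam S) F <->
  forall V W, opene V -> opene W -> F `&` hitting_times S V W !=set0.
Proof.
split=> [FS V W oV oW|FS F' [V [W [oV oW VWF']]]].
  by apply: FS; exists V, W; split.
by have [n [Fn /VWF' F'n]] := FS V W oV oW; exists n.
Qed.

Definition jointly_transitive {X Y : topologicalType} (T : X -> X) (S : Y -> Y) :=
  forall U1 U2 V1 V2, opene U1 -> opene U2 -> opene V1 -> opene V2 ->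
  hitting_times T U1 U2 `&` hitting_times S V1 V2 !=set0.

Lemma jointly_transitiveC {X Y : topologicalType} (T : X -> X) (S : Y -> Y) :
  jointly_transitive T S -> jointly_transitive S T.
Proof. by move=> TS V1 V2 U1 U2 *; rewrite setIC; exact: TS. Qed.

Lemma weakly_disjointP {X Y : topologicalType} (T : X -> X) (S : Y -> Y) :
  weakly_disjoint T S <-> jointly_transitive T S.
Proof.
split=> [TS U1 U2 V1 V2 oU1 oU2 oV1 oV2|TS A B [oA [p Ap]] [oB [q Bq]]].
  have [n [[x y] [[/= U1x V1y]]]] := TS _ _ (opene_setX oU1 oV1) (opene_setX oU2 oV2).
  rewrite /preimage /= iter_prod_map => -[U2x V2y].
  by exists n; split; [exists x | exists y].
have [U1 [V1 [[oU1 U1p] [oV1 V1p] UVA]]] := open_setX_subset oA Ap.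
have [U2 [V2 [[oU2 U2q] [oV2 V2q] UVB]]] := open_setX_subset oB Bq.
have [||||n [[x [U1x U2x]] [y [V1y V2y]]]] := TS U1 U2 V1 V2.
- by split=> //; exists p.1.
- by split=> //; exists q.1.
- by split=> //; exists p.2.
- by split=> //; exists q.2.
exists n, (x, y); split; first exact: UVA.
by rewrite /preimage /= iter_prod_map; exact: UVB.
Qed.

Lemma Tran_kdual_NFam_jointly_transitive {X Y : topologicalType}
    (T : X -> X) (S : Y -> Y) (y0 : Y) :
  hausdorff_space X -> (forall x : X, ~ open [set x]) ->
  continuous S -> (forall y, exists y', S y' = y) ->
  Tran (kdual (NFam S)) T !=set0 -> jointly_transitive T S.
Proof.
move=> hX noiso cS sS [x xTran] U1 U2 V1 V2 oU1 oU2 oV1 oV2.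
have [m [U1m _]] := proj1 (kdual_NFamP _ _) (xTran U1 oU1) _ _ (opene_setT y0) (opene_setT y0).
pose W := U2 `\` [set iter i T x | i in `I_m.+1].
have oW : opene W.
  apply: opene_setD_finite => //; first exact: hausdorff_accessible.
  exact/finite_image/finite_II.
have oSV1 : opene (iter m S @^-1` V1).
  by apply: opene_preimage oV1; [exact: continuous_iter | exact: iter_surjective].
have [n [[U2n orbn] [y [V1y V2y]]]] := proj1 (kdual_NFamP _ _) (xTran W oW) _ _ oSV1 oV2.
have mn : (m < n)%N by rewrite ltnNge; apply/negP => nm; apply: orbn; exists n.
exists (n - m)%N; split.
  by exists (iter m T x); split; rewrite // /preimage /= -iterD subnK // ltnW.
by exists (iter m S y); split; rewrite // /preimage /= -iterD subnK // ltnW.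
Qed.

Lemma Tran_kdual_NFam_bigcap {X Y : topologicalType} (T : X -> X) (S : Y -> Y)
    {b : nat -> set X} {c : nat -> set Y} :
  pi_base b -> pi_base c ->
  Tran (kdual (NFam S)) T = \bigcap_(t : nat * nat * nat)
    \bigcup_(n in hitting_times S (c t.1.2) (c t.2)) (iter n T @^-1` b t.1.1).
Proof.
move=> [ob bU] [oc cV]; apply/seteqP; split=> [x xT t _|x xG U oU].
  have [n [bn Sn]] := proj1 (kdual_NFamP _ _) (xT _ (ob t.1.1)) _ _ (oc t.1.2) (oc t.2).
  by exists n.
apply/kdual_NFamP => V W oV oW.
have [i bi] := bU U oU; have [j cj] := cV V oV; have [k ck] := cV W oW.
have [n Sn bn] := xG (i, j, k) I.
by exists n; split; [exact: bi | exact: hitting_timesS cj ck _ Sn].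
Qed.

Lemma jointly_transitive_Tran_kdual_NFam {R : realType} {X Y : pseudoMetricType R}
    (T : X -> X) (S : Y -> Y) (x0 : X) (y0 : Y) :
  compact [set: X] -> compact [set: Y] -> continuous T -> jointly_transitive T S ->
  dense (Tran (kdual (NFam S)) T) /\ Gdelta (Tran (kdual (NFam S)) T).
Proof.
move=> cX cY cT TS.
have [b bb] := compact_pi_base x0 cX; have [c cc] := compact_pi_base y0 cY.
have [F oF ->] : Gdelta_dense (Tran (kdual (NFam S)) T).
  rewrite (Tran_kdual_NFam_bigcap T S bb cc); apply: Gdelta_dense_bigcap => t.
  split.
    apply: bigcup_open => n _; apply: open_comp (proj1 (bb.1 _)).
    by move=> x _; exact: continuous_iter.
  move=> D D0 oD.
  have [n [[z [Dz bz]] Sn]] := TS D _ _ _ (conj oD D0) (bb.1 t.1.1) (cc.1 t.1.2) (cc.1 t.2).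
  by exists z; split=> //; exists n.
split; first exact: compact_Baire.
by exists F => // i; exact: (oF i).1.
Qed.

Theorem theorem5p2 (R : realType) (X Y : pseudoMetricType R)
  (T : X -> X) (S : Y -> Y) :
  dynsys T -> dynsys S ->
  let P1 := weakly_disjoint T S in
  let P2 := (dense (Tran (kdual (NFam S)) T) /\ Gdelta (Tran (kdual (NFam S)) T)) /\
            (dense (Tran (kdual (NFam T)) S) /\ Gdelta (Tran (kdual (NFam T)) S)) in
  let P3 := dense (Tran (kdual (NFam S)) T) /\ Gdelta (Tran (kdual (NFam S)) T) in
  let P4 := Tran (kdual (NFam S)) T !=set0 /\ Tran (kdual (NFam T)) S !=set0 in
  let P5 := Tran (kdual (NFam S)) T !=set0 in
  [/\ P1 <-> P2, P1 <-> P3, P1 <-> P4 & P1 <-> P5].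
Proof.
move=> [cX hX [x0 _] noisoX [cT _]] [cY _ [y0 _] _ [cS sS]] P1 P2 P3 P4 P5.
have P1_TS : P1 -> jointly_transitive T S by move/weakly_disjointP.
have P1_3 : P1 -> P3.
  by move/P1_TS; exact: jointly_transitive_Tran_kdual_NFam.
have P1_3' : P1 -> dense (Tran (kdual (NFam T)) S) /\ Gdelta (Tran (kdual (NFam T)) S).
  by move/P1_TS/jointly_transitiveC; exact: jointly_transitive_Tran_kdual_NFam.
have P3_5 : P3 -> P5 by move=> [/(dense_nonempty x0)].
have P5_1 : P5 -> P1.
  by move/(Tran_kdual_NFam_jointly_transitive T S y0 hX noisoX cS sS)/weakly_disjointP.
have P1_2 : P1 -> P2 by move=> P1h; split; [exact: P1_3 | exact: P1_3'].
have P1_4 : P1 -> P4.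
  by move=> P1h; split; [exact/P3_5/P1_3 | case: (P1_3' P1h) => /(dense_nonempty y0)].
split; split.
- exact: P1_2.
- by case=> /P3_5/P5_1.
- exact: P1_3.
- by move/P3_5/P5_1.
- exact: P1_4.
- by case=> /P5_1.
- by move/P1_3/P3_5.
- exact: P5_1.
Qed.
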